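(* Let $k,t\ge2$ be coprime integers and suppose that $mk \leq t < (m+1)k$ for some integer $m \geq 2$. Let $1\le r\le t-k$ and let $1\le\bar r\le t$ be the representative of $rk^{-1}\pmod t$. If $\bar{r} \geq m + 1$, then \[ k\,\psi_{k/t}\left(\frac{r}{t}\right)> \psi_{1/t}\left(\frac{\bar{r}}{t}\right), \] where $\psi_c(y) \coloneqq \psi(y+c)-\psi(y)$ for $c,y>0$.
   Context: $\psi=\Gamma'/\Gamma$ is the digamma function. *)

From Stdlib Require Import Reals Arith.
From Coquelicot Require Import Coquelicot.
Open Scope R_scope.

Definition Gamma (x : R) : R :=
  RInt_gen (fun t => Rpower t (x - 1) * exp (- t))
           (at_right 0) (Rbar_locally p_infty).

Definition digamma (x : R) : R := Derive Gamma x / Gamma x.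

Definition psi_c (c y : R) : R := digamma (y + c) - digamma y.

(* The digamma function satisfies [psi (x + 1) = psi x + 1 / x] and is increasing, so
   [psi_c c y] telescopes into [sum_n c / ((y + n) (y + n + c))].  Comparing the terms with
   telescoping series gives, for [0 < c <= 1],
     c / (y (y + c)) + c / (y + 1) <= psi_c c y <= c / (y (y + c)) + c / (y + c),
   and with [y = r / t, c = k / t] on the left and [y = rbar / t, c = 1 / t] on the right the
   claim reduces to elementary estimates using [r + k <= t], [2 k <= t] and [t < rbar k].
   Both properties of [psi] come from [Gamma (x + 1) = x Gamma x] and the log-convexity of
   [Gamma] (Hölder's inequality on Euler's integral). *)

From Stdlib Require Import Reals Lra Lia Psatz FunctionalExtensionality.
From Coquelicot Require Import Coquelicot.
Open Scope R_scope.

Lemma exists_nat_gt r : exists n : nat, r < INR n.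
Proof.
  destruct (nfloor_ex (Rmax r 0) (Rmax_r r 0)) as [n Hn].
  exists (S n). rewrite S_INR. pose proof (Rmax_l r 0). lra.
Qed.

Lemma exp_le_compat x y : x <= y -> exp x <= exp y.
Proof. intros [Hlt | ->]; [left; apply exp_increasing | right]; auto. Qed.

Lemma exp_sub_ln u t : 0 < t -> exp (u - ln t) = exp u / t.
Proof. intros Ht. unfold Rminus. rewrite exp_plus, exp_Ropp, exp_ln; auto. Qed.

Lemma ln_le_sub_1 u : 0 < u -> ln u <= u - 1.
Proof. intros Hu. pose proof (exp_ineq1_le (ln u)). rewrite exp_ln in H; lra. Qed.

Lemma mul_ln_sub_le s t : 0 < s -> 0 < t -> s * ln t - t <= s * ln s - s.
Proof.
  intros Hs Ht. pose proof (ln_le_sub_1 (t / s) ltac:(apply Rdiv_lt_0_compat; lra)).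
  rewrite ln_div in H by lra.
  assert (s * (ln t - ln s) <= s * (t / s - 1)) by (apply Rmult_le_compat_l; lra).
  replace (s * (t / s - 1)) with (t - s) in H0 by (field; lra). lra.
Qed.

Lemma exp_mul_ln_sub_bounded s :
  exists K, forall t, 1 <= t -> exp (s * ln t - t) <= K.
Proof.
  pose proof (Rmax_l s 1). pose proof (Rmax_r s 1). set (s' := Rmax s 1) in *.
  exists (exp (s' * ln s' - s')). intros t Ht.
  apply exp_le_compat.
  assert (0 <= ln t) by (rewrite <- ln_1; apply ln_le; lra).
  pose proof (mul_ln_sub_le s' t ltac:(lra) ltac:(lra)). nra.
Qed.

Lemma exp_convex l u v : 0 <= l <= 1 ->
  exp (l * u + (1 - l) * v) <= l * exp u + (1 - l) * exp v.
Proof.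
  intros Hl. set (w := l * u + (1 - l) * v).
  (* [exp] lies above its tangent line at [w] *)
  assert (Htan : forall z, exp w * (1 + (z - w)) <= exp z).
  { intros z. pose proof (exp_ineq1_le (z - w)). pose proof (exp_pos w).
    replace z with (w + (z - w)) at 2 by ring. rewrite exp_plus. nra. }
  assert (E : exp w = l * (exp w * (1 + (u - w))) + (1 - l) * (exp w * (1 + (v - w)))).
  { transitivity (exp w * (l * (1 + (u - w)) + (1 - l) * (1 + (v - w)))); [| ring].
    replace (l * (1 + (u - w)) + (1 - l) * (1 + (v - w))) with 1 by (unfold w; ring). ring. }
  pose proof (Rmult_le_compat_l l _ _ (proj1 Hl) (Htan u)).
  pose proof (Rmult_le_compat_l (1 - l) _ _ ltac:(lra) (Htan v)).
  lra.
Qed.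

Lemma Rpower_weighted_am_gm l u v : 0 <= l <= 1 -> 0 < u -> 0 < v ->
  Rpower u l * Rpower v (1 - l) <= l * u + (1 - l) * v.
Proof.
  intros Hl Hu Hv. unfold Rpower. rewrite <- exp_plus.
  rewrite <- (exp_ln u) at 2 by lra. rewrite <- (exp_ln v) at 2 by lra.
  now apply exp_convex.
Qed.

Lemma is_lim_seq_fin_unique u (a b : R) : is_lim_seq u a -> is_lim_seq u b -> a = b.
Proof.
  intros Ha Hb. apply is_lim_seq_unique in Ha, Hb. rewrite Ha in Hb. now injection Hb.
Qed.

Lemma Rbar_loc_seq_0 n : Rbar_loc_seq 0 n = / (INR n + 1).
Proof. apply Rplus_0_l. Qed.

Lemma Rbar_loc_seq_0_pos n : 0 < Rbar_loc_seq 0 n.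
Proof. rewrite Rbar_loc_seq_0. pose proof (pos_INR n). apply Rinv_0_lt_compat. lra. Qed.

Lemma Rbar_loc_seq_0_le_succ n : Rbar_loc_seq 0 (S n) <= Rbar_loc_seq 0 n.
Proof.
  rewrite !Rbar_loc_seq_0, S_INR. pose proof (pos_INR n). apply Rinv_le_contravar; lra.
Qed.

Lemma is_lim_seq_div_INR_succ C : is_lim_seq (fun n => C / (INR n + 1)) 0.
Proof.
  pose proof (is_lim_seq_scal_l _ C _ (is_lim_seq_Rbar_loc_seq 0)) as H.
  simpl in H. rewrite Rmult_0_r in H.
  eapply is_lim_seq_ext; [| exact H]. intros n. simpl. unfold Rdiv. ring.
Qed.

Lemma Rle_of_le_add_div_INR_succ a b C : (forall n, a <= b + C / (INR n + 1)) -> a <= b.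
Proof.
  intros H.
  pose proof (is_lim_seq_le (fun _ => a) _ a (b + 0) H (is_lim_seq_const a)
                (is_lim_seq_plus' _ _ _ _ (is_lim_seq_const b) (is_lim_seq_div_INR_succ C))).
  simpl in H0. lra.
Qed.

(** * Euler's integral as a limit of proper integrals *)

Section PositiveImproperIntegral.

Variable f : R -> R.
Hypothesis f_ge0 : forall t, 0 < t -> 0 <= f t.
Hypothesis f_cont : forall t, 0 < t -> continuous f t.

Lemma ex_RInt_pos a b : 0 < a -> 0 < b -> ex_RInt f a b.
Proof.
  intros Ha Hb. apply (@ex_RInt_continuous R_CompleteNormedModule). intros z Hz. apply f_cont.
  pose proof (Rmin_glb_lt a b 0 Ha Hb). lra.
Qed.

Lemma RInt_le_widen a' a b b' : 0 < a' -> a' <= a -> a <= b -> b <= b' ->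
  RInt f a b <= RInt f a' b'.
Proof.
  intros Ha' Ha'a Hab Hbb'.
  rewrite <- (RInt_Chasles f a' a b'), <- (RInt_Chasles f a b b');
    try apply ex_RInt_pos; try lra.
  assert (0 <= RInt f a' a) by (apply RInt_ge_0; auto; [apply ex_RInt_pos | intros; apply f_ge0]; lra).
  assert (0 <= RInt f b b') by (apply RInt_ge_0; auto; [apply ex_RInt_pos | intros; apply f_ge0]; lra).
  unfold plus; simpl. lra.
Qed.

Definition trunc_RInt (n : nat) : R := RInt f (exp (- INR n)) (INR n + 1).

Lemma exp_opp_INR_bounds n : 0 < exp (- INR n) <= 1.
Proof.
  split; [apply exp_pos |]. rewrite <- exp_0. apply exp_le_compat.
  pose proof (pos_INR n). lra.
Qed.

Lemma RInt_le_trunc_RInt n a b : exp (- INR n) <= a -> a <= b -> b <= INR n + 1 ->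
  RInt f a b <= trunc_RInt n.
Proof. intros. apply RInt_le_widen; auto. apply exp_pos. Qed.

Lemma trunc_RInt_le_succ n : trunc_RInt n <= trunc_RInt (S n).
Proof.
  pose proof (exp_opp_INR_bounds n). pose proof (pos_INR n).
  apply RInt_le_trunc_RInt; rewrite ?S_INR; try lra.
  apply exp_le_compat. lra.
Qed.

Lemma is_RInt_gen_trunc_RInt (l : R) : is_lim_seq trunc_RInt l ->
  is_RInt_gen f (at_right 0) (Rbar_locally p_infty) l.
Proof.
  intros Hl P [eps HP].
  assert (Hle : forall n, trunc_RInt n <= l)
    by (apply is_lim_seq_incr_compare; auto; apply trunc_RInt_le_succ).
  destruct (proj2 (is_lim_seq_spec _ _) Hl eps) as [N HN].
  specialize (HN N (Nat.le_refl _)). apply Rabs_lt_between' in HN.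
  pose proof (exp_opp_INR_bounds N). pose proof (pos_INR N).
  apply Filter_prod with (fun a => 0 < a < exp (- INR N)) (fun b => INR N + 1 < b).
  - exists (mkposreal _ (proj1 (exp_opp_INR_bounds N))). intros a Ha Ha0. split; auto.
    unfold ball in Ha; simpl in Ha. unfold AbsRing_ball, abs, minus, plus, opp in Ha; simpl in Ha.
    rewrite Rabs_right in Ha; lra.
  - exists (INR N + 1). auto.
  - intros a b Ha Hb. exists (RInt f a b). split.
    + apply (@RInt_correct R_CompleteNormedModule), ex_RInt_pos; lra.
    + apply HP. unfold ball; simpl. unfold AbsRing_ball, abs, minus, plus, opp; simpl.
      assert (HNab : trunc_RInt N <= RInt f a b) by (apply RInt_le_widen; lra).
      destruct (exists_nat_gt (Rmax (- ln a) b)) as [n Hn].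
      pose proof (Rmax_l (- ln a) b). pose proof (Rmax_r (- ln a) b).
      assert (Hn_ab : RInt f a b <= trunc_RInt n).
      { apply RInt_le_trunc_RInt; try lra.
        rewrite <- (exp_ln a) by lra. apply exp_le_compat. lra. }
      specialize (Hle n). apply Rabs_lt_between'. pose proof (cond_pos eps). lra.
Qed.

End PositiveImproperIntegral.

Definition gamma_integrand (x t : R) : R := exp ((x - 1) * ln t - t).

Notation Gamma_trunc x := (trunc_RInt (gamma_integrand x)).

Lemma Gamma_RInt_gen x :
  Gamma x = RInt_gen (gamma_integrand x) (at_right 0) (Rbar_locally p_infty).
Proof.
  unfold Gamma. f_equal. apply functional_extensionality. intros t.
  unfold Rpower, gamma_integrand. rewrite <- exp_plus. reflexivity.
Qed.

Lemma gamma_integrand_pos x t : 0 < gamma_integrand x t.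
Proof. apply exp_pos. Qed.

Lemma gamma_integrand_ge0 x t : 0 < t -> 0 <= gamma_integrand x t.
Proof. intros _. apply Rlt_le, gamma_integrand_pos. Qed.

Lemma continuous_gamma_integrand x t : 0 < t -> continuous (gamma_integrand x) t.
Proof.
  intros Ht. apply (@ex_derive_continuous R_AbsRing R_NormedModule).
  unfold gamma_integrand. auto_derive. lra.
Qed.

Lemma ex_RInt_gamma_integrand x a b : 0 < a -> 0 < b -> ex_RInt (gamma_integrand x) a b.
Proof. apply ex_RInt_pos, continuous_gamma_integrand. Qed.

Lemma RInt_gamma_integrand_le_0_1 x a : 0 < x -> 0 < a <= 1 ->
  RInt (gamma_integrand x) a 1 <= 1 / x.
Proof.
  intros Hx Ha.
  assert (Hpow : is_RInt (fun t => exp ((x - 1) * ln t)) a 1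
                   (minus (exp (x * ln 1) / x) (exp (x * ln a) / x))).
  { apply (@is_RInt_derive R_CompleteNormedModule (fun t => exp (x * ln t) / x));
      intros t Ht; rewrite Rmin_left, Rmax_right in Ht by lra.
    - auto_derive; [lra |].
      replace ((x - 1) * ln t) with (x * ln t - ln t) by ring.
      rewrite exp_sub_ln by lra. field. split; lra.
    - apply (@ex_derive_continuous R_AbsRing R_NormedModule). auto_derive. lra. }
  apply Rle_trans with (RInt (fun t => exp ((x - 1) * ln t)) a 1).
  - apply RInt_le; [lra | apply ex_RInt_gamma_integrand; lra | eexists; apply Hpow |].
    intros t Ht. apply exp_le_compat. lra.
  - rewrite (is_RInt_unique _ _ _ _ Hpow), ln_1, Rmult_0_r, exp_0.
    unfold minus, plus, opp; simpl.
    assert (0 < exp (x * ln a) / x) by (apply Rdiv_lt_0_compat; [apply exp_pos | lra]).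
    lra.
Qed.

Lemma RInt_gamma_integrand_le_1 x K b :
  (forall t, 1 <= t -> exp ((x + 1) * ln t - t) <= K) -> 1 <= b ->
  RInt (gamma_integrand x) 1 b <= K.
Proof.
  intros HK Hb.
  assert (Hsq : is_RInt (fun t => K / (t * t)) 1 b (minus (- K / b) (- K / 1))).
  { apply (@is_RInt_derive R_CompleteNormedModule (fun t => - K / t));
      intros t Ht; rewrite Rmin_left, Rmax_right in Ht by lra.
    - auto_derive; [lra |]. field. lra.
    - apply (@ex_derive_continuous R_AbsRing R_NormedModule). auto_derive. nra. }
  pose proof (HK 1 (Rle_refl 1)). pose proof (exp_pos ((x + 1) * ln 1 - 1)).
  apply Rle_trans with (RInt (fun t => K / (t * t)) 1 b).
  - apply RInt_le; [lra | apply ex_RInt_gamma_integrand; lra | eexists; apply Hsq |].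
    intros t Ht. unfold gamma_integrand.
    replace ((x - 1) * ln t - t) with (((x + 1) * ln t - t) - ln t - ln t) by ring.
    rewrite !exp_sub_ln by lra. unfold Rdiv. rewrite Rinv_mult, <- Rmult_assoc.
    pose proof (HK t ltac:(lra)).
    apply Rmult_le_compat_r; [apply Rlt_le, Rinv_0_lt_compat; lra |].
    apply Rmult_le_compat_r; [apply Rlt_le, Rinv_0_lt_compat; lra | auto].
  - rewrite (is_RInt_unique _ _ _ _ Hsq). unfold minus, plus, opp; simpl.
    assert (0 <= K / b) by (apply Rdiv_le_0_compat; lra).
    replace (- K / b + - (- K / 1)) with (K - K / b) by (field; lra). lra.
Qed.

Lemma Gamma_trunc_bounded x : 0 < x -> exists M, forall n, Gamma_trunc x n <= M.
Proof.
  intros Hx. destruct (exp_mul_ln_sub_bounded (x + 1)) as [K HK].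
  exists (1 / x + K). intros n. unfold trunc_RInt.
  pose proof (exp_opp_INR_bounds n). pose proof (pos_INR n).
  rewrite <- (RInt_Chasles (gamma_integrand x) _ 1);
    try apply ex_RInt_gamma_integrand; try lra.
  pose proof (RInt_gamma_integrand_le_0_1 x (exp (- INR n)) Hx H).
  pose proof (RInt_gamma_integrand_le_1 x K (INR n + 1) HK ltac:(lra)).
  unfold plus; simpl. lra.
Qed.

Lemma is_lim_seq_Gamma_trunc x : 0 < x -> is_lim_seq (Gamma_trunc x) (Gamma x).
Proof.
  intros Hx. destruct (Gamma_trunc_bounded x Hx) as [M HM].
  pose proof (trunc_RInt_le_succ _ (gamma_integrand_ge0 x) (continuous_gamma_integrand x)) as Hincr.
  destruct (ex_finite_lim_seq_incr _ M Hincr HM) as [l Hl].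
  replace (Gamma x) with l; auto.
  rewrite Gamma_RInt_gen. symmetry.
  apply (@is_RInt_gen_unique R_CompleteNormedModule _ _
           (Proper_StrongProper _ (at_right_proper_filter 0))
           (Proper_StrongProper _ (Rbar_locally_filter p_infty))).
  apply is_RInt_gen_trunc_RInt; auto using gamma_integrand_ge0, continuous_gamma_integrand.
Qed.

Lemma Gamma_trunc_le_Gamma x n : 0 < x -> Gamma_trunc x n <= Gamma x.
Proof.
  intros Hx. apply is_lim_seq_incr_compare; [now apply is_lim_seq_Gamma_trunc |].
  apply trunc_RInt_le_succ; [apply gamma_integrand_ge0 | apply continuous_gamma_integrand].
Qed.

Lemma Gamma_gt0 x : 0 < x -> 0 < Gamma x.
Proof.
  intros Hx. apply Rlt_le_trans with (Gamma_trunc x 1); [| now apply Gamma_trunc_le_Gamma].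
  pose proof (exp_opp_INR_bounds 1) as [H0 H1]. unfold trunc_RInt. rewrite INR_1 in *.
  assert (exp (- 1) < exp 0) by (apply exp_increasing; lra). rewrite exp_0 in H.
  apply RInt_gt_0; [lra | intros; apply gamma_integrand_pos |].
  intros t Ht. apply continuous_gamma_integrand. lra.
Qed.

Lemma Gamma_le_lin_comb p a c α β : 0 < p -> 0 < a -> 0 < c ->
  (forall t, 0 < t -> gamma_integrand p t <= α * gamma_integrand a t + β * gamma_integrand c t) ->
  Gamma p <= α * Gamma a + β * Gamma c.
Proof.
  intros Hp Ha Hc Hpt.
  assert (Hn : forall n, Gamma_trunc p n <= α * Gamma_trunc a n + β * Gamma_trunc c n).
  { intros n. unfold trunc_RInt.
    pose proof (exp_opp_INR_bounds n). pose proof (pos_INR n).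
    assert (Hint : forall y, ex_RInt (gamma_integrand y) (exp (- INR n)) (INR n + 1))
      by (intros; apply ex_RInt_gamma_integrand; lra).
    pose proof (RInt_plus (V := R_CompleteNormedModule)
                  (fun t => scal α (gamma_integrand a t)) (fun t => scal β (gamma_integrand c t))
                  _ _ (ex_RInt_scal _ _ _ _ (Hint a)) (ex_RInt_scal _ _ _ _ (Hint c))) as E.
    rewrite !(RInt_scal (V := R_CompleteNormedModule)) in E by apply Hint.
    unfold plus, scal in E; simpl in E; unfold mult in E; simpl in E. rewrite <- E.
    apply RInt_le; [lra | apply Hint | | intros t Ht; apply Hpt; lra].
    apply (ex_RInt_plus (V := R_NormedModule)); apply (ex_RInt_scal (V := R_NormedModule)), Hint. }
  exact (is_lim_seq_le _ _ _ _ Hn (is_lim_seq_Gamma_trunc p Hp)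
      (is_lim_seq_plus' _ _ _ _ (is_lim_seq_scal_l _ α _ (is_lim_seq_Gamma_trunc a Ha))
                               (is_lim_seq_scal_l _ β _ (is_lim_seq_Gamma_trunc c Hc)))).
Qed.

Lemma Gamma_log_convex l a c : 0 <= l <= 1 -> 0 < a -> 0 < c ->
  Gamma (l * a + (1 - l) * c) <= Rpower (Gamma a) l * Rpower (Gamma c) (1 - l).
Proof.
  intros Hl Ha Hc.
  pose proof (Gamma_gt0 a Ha) as Ga. pose proof (Gamma_gt0 c Hc) as Gc.
  set (K := Rpower (Gamma a) l * Rpower (Gamma c) (1 - l)).
  assert (HK : 0 < K) by (apply Rmult_lt_0_compat; apply exp_pos).
  replace K with (K * l / Gamma a * Gamma a + K * (1 - l) / Gamma c * Gamma c) by (field; lra).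
  apply Gamma_le_lin_comb; [nra | auto | auto |].
  intros t Ht.
  set (u := gamma_integrand a t / Gamma a). set (v := gamma_integrand c t / Gamma c).
  assert (Hu : 0 < u) by (apply Rdiv_lt_0_compat; [apply gamma_integrand_pos | lra]).
  assert (Hv : 0 < v) by (apply Rdiv_lt_0_compat; [apply gamma_integrand_pos | lra]).
  (* pointwise Hölder: weighted AM-GM applied to the normalised integrands [u] and [v] *)
  assert (E : gamma_integrand (l * a + (1 - l) * c) t = K * (Rpower u l * Rpower v (1 - l))).
  { unfold K, u, v, Rpower, gamma_integrand.
    rewrite !ln_div, !ln_exp by (try apply exp_pos; lra).
    rewrite <- !exp_plus. f_equal. ring. }
  rewrite E. pose proof (Rpower_weighted_am_gm l u v Hl Hu Hv).
  replace (K * l / Gamma a * gamma_integrand a t + K * (1 - l) / Gamma c * gamma_integrand c t)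
    with (K * (l * u + (1 - l) * v)) by (unfold u, v; field; lra).
  apply Rmult_le_compat_l; lra.
Qed.

Lemma RInt_gamma_integrand_succ x a b : 0 < a -> 0 < b ->
  RInt (gamma_integrand (x + 1)) a b
  = x * RInt (gamma_integrand x) a b + gamma_integrand (x + 1) a - gamma_integrand (x + 1) b.
Proof.
  intros Ha Hb.
  assert (Hmin : 0 < Rmin a b) by (apply Rmin_glb_lt; auto).
  (* integration by parts: d/dt (- t^x e^-t) = t^x e^-t - x t^(x-1) e^-t *)
  assert (Hd : is_RInt (fun t => minus (gamma_integrand (x + 1) t) (scal x (gamma_integrand x t))) a b
                 (minus (- gamma_integrand (x + 1) b) (- gamma_integrand (x + 1) a))).
  { apply (@is_RInt_derive R_CompleteNormedModule (fun s => - gamma_integrand (x + 1) s));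
      intros t Ht.
    - unfold minus, plus, opp, scal, gamma_integrand; simpl; unfold mult; simpl.
      auto_derive; [lra |].
      replace (x + 1 - 1) with x by ring.
      replace ((x - 1) * ln t - t) with ((x * ln t - t) - ln t) by ring.
      rewrite exp_sub_ln by lra. unfold Rminus. field. lra.
    - apply (@ex_derive_continuous R_AbsRing R_NormedModule).
      unfold minus, plus, opp, scal, gamma_integrand; simpl; unfold mult; simpl.
      auto_derive. lra. }
  apply (is_RInt_unique (V := R_CompleteNormedModule)) in Hd.
  rewrite (RInt_minus (V := R_CompleteNormedModule)), (RInt_scal (V := R_CompleteNormedModule)) in Hd.
  - change (RInt (gamma_integrand (x + 1)) a b - x * RInt (gamma_integrand x) a b
            = - gamma_integrand (x + 1) b - - gamma_integrand (x + 1) a) in Hd. lra.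
  - now apply ex_RInt_gamma_integrand.
  - now apply ex_RInt_gamma_integrand.
  - now apply (ex_RInt_scal (V := R_NormedModule)), ex_RInt_gamma_integrand.
Qed.

Lemma is_lim_seq_gamma_integrand_at_0 x : 0 < x ->
  is_lim_seq (fun n => gamma_integrand (x + 1) (exp (- INR n))) 0.
Proof.
  intros Hx.
  assert (Hq : Rabs (exp (- x)) < 1).
  { rewrite Rabs_pos_eq by apply Rlt_le, exp_pos. rewrite <- exp_0. apply exp_increasing. lra. }
  apply (is_lim_seq_le_le (fun _ => 0) _ (fun n => exp (- x) ^ n));
    [| apply is_lim_seq_const | apply (is_lim_seq_geom _ Hq)].
  intros n. split; [apply Rlt_le, gamma_integrand_pos |].
  rewrite <- Rpower_pow by apply exp_pos. unfold Rpower, gamma_integrand. rewrite !ln_exp.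
  apply exp_le_compat. pose proof (exp_pos (- INR n)). lra.
Qed.

Lemma is_lim_seq_gamma_integrand_at_infty x :
  is_lim_seq (fun n => gamma_integrand (x + 1) (INR n + 1)) 0.
Proof.
  destruct (exp_mul_ln_sub_bounded (x + 1)) as [K HK].
  apply (is_lim_seq_le_le (fun _ => 0) _ (fun n => K / (INR n + 1)));
    [| apply is_lim_seq_const | apply is_lim_seq_div_INR_succ].
  intros n. pose proof (pos_INR n). split; [apply Rlt_le, gamma_integrand_pos |].
  unfold gamma_integrand.
  replace ((x + 1 - 1) * ln (INR n + 1) - (INR n + 1))
    with (((x + 1) * ln (INR n + 1) - (INR n + 1)) - ln (INR n + 1)) by ring.
  rewrite exp_sub_ln by lra. unfold Rdiv.
  apply Rmult_le_compat_r; [apply Rlt_le, Rinv_0_lt_compat; lra | apply HK; lra].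
Qed.

Lemma Gamma_succ x : 0 < x -> Gamma (x + 1) = x * Gamma x.
Proof.
  intros Hx.
  assert (Hn : forall n, Gamma_trunc (x + 1) n
            = x * Gamma_trunc x n + gamma_integrand (x + 1) (exp (- INR n))
              - gamma_integrand (x + 1) (INR n + 1)).
  { intros n. apply RInt_gamma_integrand_succ; [apply exp_pos | pose proof (pos_INR n); lra]. }
  apply (is_lim_seq_fin_unique (Gamma_trunc (x + 1))); [now apply is_lim_seq_Gamma_trunc; lra |].
  eapply is_lim_seq_ext; [intros n; symmetry; apply Hn |].
  replace (x * Gamma x) with (x * Gamma x + 0 - 0) by ring.
  apply is_lim_seq_minus'; [apply is_lim_seq_plus' |].
  - apply (is_lim_seq_scal_l _ x _ (is_lim_seq_Gamma_trunc x Hx)).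
  - now apply is_lim_seq_gamma_integrand_at_0.
  - apply is_lim_seq_gamma_integrand_at_infty.
Qed.

(** * Convex and log-convex functions *)

Section ConvexSlopes.

Variable f : R -> R.
Hypothesis f_convex : forall l a c, 0 <= l <= 1 -> 0 < a -> 0 < c ->
  f (l * a + (1 - l) * c) <= l * f a + (1 - l) * f c.

Definition slope x h := (f (x + h) - f x) / h.

Lemma slope_le x h1 h2 : 0 < x -> 0 < h1 <= h2 -> slope x h1 <= slope x h2.
Proof.
  intros Hx Hh.
  assert (Hl : 0 <= h1 / h2 <= 1).
  { split; [apply Rlt_le, Rdiv_lt_0_compat; lra |]. apply Rle_div_l; lra. }
  pose proof (f_convex (1 - h1 / h2) x (x + h2) ltac:(lra) Hx ltac:(lra)) as H.
  replace ((1 - h1 / h2) * x + (1 - (1 - h1 / h2)) * (x + h2)) with (x + h1) in H by (field; lra).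
  unfold slope. apply Rle_div_l; [lra |].
  replace ((f (x + h2) - f x) / h2 * h1) with (h1 / h2 * f (x + h2) - h1 / h2 * f x) by (field; lra).
  lra.
Qed.

Lemma slope_half_le x h : 0 < x -> 0 < h -> slope (x / 2) (x / 2) <= slope x h.
Proof.
  intros Hx Hh.
  set (l := h / (h + x / 2)).
  assert (Hl : 0 <= l <= 1).
  { unfold l. split; [apply Rlt_le, Rdiv_lt_0_compat; lra |]. apply Rle_div_l; lra. }
  pose proof (f_convex l (x / 2) (x + h) Hl ltac:(lra) ltac:(lra)) as H.
  replace (l * (x / 2) + (1 - l) * (x + h)) with x in H by (unfold l; field; lra).
  unfold slope. replace (x / 2 + x / 2) with x by field.
  apply Rle_div_l; [lra |].
  replace ((f (x + h) - f x) / h * (x / 2)) with ((h + x / 2) / h * ((1 - l) * (f (x + h) - f x)))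
    by (unfold l; field; lra).
  replace (f x - f (x / 2)) with ((h + x / 2) / h * (l * (f x - f (x / 2)))) by (unfold l; field; lra).
  assert (0 < (h + x / 2) / h) by (apply Rdiv_lt_0_compat; lra).
  apply Rmult_le_compat_l; lra.
Qed.

(* Coquelicot's [Derive f x] is the limit of [slope x h] along [h = 1 / (n + 1)]; for convex
   [f] these slopes decrease and are bounded below, so the limit exists without having to
   prove that [f] is differentiable. *)
Lemma is_lim_seq_slope_Derive x : 0 < x ->
  is_lim_seq (fun n => slope x (Rbar_loc_seq 0 n)) (Derive f x).
Proof.
  intros Hx.
  assert (Hdecr : forall n, slope x (Rbar_loc_seq 0 (S n)) <= slope x (Rbar_loc_seq 0 n)).
  { intros n. apply slope_le; auto. split; [apply Rbar_loc_seq_0_pos | apply Rbar_loc_seq_0_le_succ]. }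
  assert (Hbound : forall n, slope (x / 2) (x / 2) <= slope x (Rbar_loc_seq 0 n)).
  { intros n. apply slope_half_le; auto. apply Rbar_loc_seq_0_pos. }
  destruct (ex_finite_lim_seq_decr _ _ Hdecr Hbound) as [l Hl].
  change (Derive f x) with (real (Lim_seq (fun n => slope x (Rbar_loc_seq 0 n)))).
  now rewrite (is_lim_seq_unique _ _ Hl).
Qed.

End ConvexSlopes.

Section LogConvex.

Variable f : R -> R.
Hypothesis f_pos : forall x, 0 < x -> 0 < f x.
Hypothesis f_log_convex : forall l a c, 0 <= l <= 1 -> 0 < a -> 0 < c ->
  f (l * a + (1 - l) * c) <= Rpower (f a) l * Rpower (f c) (1 - l).

Lemma log_convex_convex l a c : 0 <= l <= 1 -> 0 < a -> 0 < c ->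
  f (l * a + (1 - l) * c) <= l * f a + (1 - l) * f c.
Proof.
  intros Hl Ha Hc. eapply Rle_trans; [now apply f_log_convex |].
  now apply Rpower_weighted_am_gm; auto.
Qed.

Lemma log_convex_mul_shift_le a b h : 0 < a < b -> 0 < h ->
  f (a + h) * f b <= f a * f (b + h).
Proof.
  intros Hab Hh.
  set (l := (b - a) / (b - a + h)).
  assert (Hl : 0 <= l <= 1).
  { unfold l. split; [apply Rlt_le, Rdiv_lt_0_compat; lra |]. apply Rle_div_l; lra. }
  pose proof (f_log_convex l a (b + h) Hl ltac:(lra) ltac:(lra)) as H1.
  pose proof (f_log_convex (1 - l) a (b + h) ltac:(lra) ltac:(lra) ltac:(lra)) as H2.
  replace (l * a + (1 - l) * (b + h)) with (a + h) in H1 by (unfold l; field; lra).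
  replace ((1 - l) * a + (1 - (1 - l)) * (b + h)) with b in H2 by (unfold l; field; lra).
  pose proof (f_pos (a + h) ltac:(lra)). pose proof (f_pos b ltac:(lra)).
  eapply Rle_trans; [apply Rmult_le_compat; [lra | lra | exact H1 | exact H2] |].
  replace (1 - (1 - l)) with l by ring.
  replace (Rpower (f a) l * Rpower (f (b + h)) (1 - l) * (Rpower (f a) (1 - l) * Rpower (f (b + h)) l))
    with (Rpower (f a) (l + (1 - l)) * Rpower (f (b + h)) ((1 - l) + l))
    by (rewrite !Rpower_plus; ring).
  replace (l + (1 - l)) with 1 by ring. replace (1 - l + l) with 1 by ring.
  rewrite !Rpower_1 by (apply f_pos; lra). lra.
Qed.

Lemma Derive_div_le a b : 0 < a <= b -> Derive f a / f a <= Derive f b / f b.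
Proof.
  intros [Ha [Hab | <-]]; [| lra].
  pose proof (f_pos a Ha) as Fa. pose proof (f_pos b ltac:(lra)) as Fb.
  assert (Hn : forall n, slope f a (Rbar_loc_seq 0 n) * / f a <= slope f b (Rbar_loc_seq 0 n) * / f b).
  { intros n. pose proof (Rbar_loc_seq_0_pos n). set (h := Rbar_loc_seq 0 n) in *.
    pose proof (log_convex_mul_shift_le a b h ltac:(lra) H).
    replace (slope f a h * / f a) with ((f (a + h) * f b - f a * f b) / (h * f a * f b))
      by (unfold slope; field; lra).
    replace (slope f b h * / f b) with ((f a * f (b + h) - f a * f b) / (h * f a * f b))
      by (unfold slope; field; lra).
    unfold Rdiv. apply Rmult_le_compat_r; [| lra].
    apply Rlt_le, Rinv_0_lt_compat. apply Rmult_lt_0_compat; [nra | lra]. }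
  pose proof (is_lim_seq_slope_Derive f log_convex_convex) as Hlim.
  exact (is_lim_seq_le _ _ _ _ Hn (is_lim_seq_scal_r _ _ _ (Hlim a Ha))
           (is_lim_seq_scal_r _ _ _ (Hlim b ltac:(lra)))).
Qed.

End LogConvex.

(** * The digamma function *)

Lemma Derive_Gamma_succ x : 0 < x -> Derive Gamma (x + 1) = Gamma x + x * Derive Gamma x.
Proof.
  intros Hx.
  pose proof (is_lim_seq_slope_Derive Gamma (log_convex_convex Gamma Gamma_gt0 Gamma_log_convex))
    as Hlim.
  assert (Hn : forall n, slope Gamma (x + 1) (Rbar_loc_seq 0 n)
      = Gamma x + Rbar_loc_seq 0 n * slope Gamma x (Rbar_loc_seq 0 n)
        + x * slope Gamma x (Rbar_loc_seq 0 n)).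
  { intros n. pose proof (Rbar_loc_seq_0_pos n). set (h := Rbar_loc_seq 0 n) in *. unfold slope.
    replace (x + 1 + h) with ((x + h) + 1) by ring. rewrite !Gamma_succ by lra. field. lra. }
  apply (is_lim_seq_fin_unique (fun n => slope Gamma (x + 1) (Rbar_loc_seq 0 n))); [apply Hlim; lra |].
  eapply is_lim_seq_ext; [intros n; symmetry; apply Hn |].
  replace (Gamma x + x * Derive Gamma x) with (Gamma x + 0 * Derive Gamma x + x * Derive Gamma x) by ring.
  apply is_lim_seq_plus'; [apply is_lim_seq_plus' |].
  - apply is_lim_seq_const.
  - apply is_lim_seq_mult'; [apply (is_lim_seq_Rbar_loc_seq 0) | now apply Hlim].
  - apply (is_lim_seq_scal_l _ x _ (Hlim x Hx)).
Qed.

Lemma digamma_succ x : 0 < x -> digamma (x + 1) = digamma x + 1 / x.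
Proof.
  intros Hx. pose proof (Gamma_gt0 x Hx). unfold digamma.
  rewrite Derive_Gamma_succ, Gamma_succ by auto. field. lra.
Qed.

Lemma digamma_le a b : 0 < a <= b -> digamma a <= digamma b.
Proof. apply Derive_div_le; [apply Gamma_gt0 | apply Gamma_log_convex]. Qed.

Lemma psi_c_succ c y : 0 < y -> 0 < y + c ->
  psi_c c y = c / (y * (y + c)) + psi_c c (y + 1).
Proof.
  intros Hy Hyc. unfold psi_c.
  replace (y + 1 + c) with ((y + c) + 1) by ring. rewrite !digamma_succ by auto. field. lra.
Qed.

Lemma psi_c_ge0 c w : 0 <= c -> 0 < w -> 0 <= psi_c c w.
Proof. intros Hc Hw. unfold psi_c. pose proof (digamma_le w (w + c) ltac:(lra)). lra. Qed.

Lemma psi_c_le_inv c w : c <= 1 -> 0 < w -> 0 < w + c -> psi_c c w <= 1 / w.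
Proof.
  intros Hc Hw Hwc. unfold psi_c.
  pose proof (digamma_le (w + c) (w + 1) ltac:(lra)). rewrite digamma_succ in H by auto. lra.
Qed.

(* Unrolling [psi_c_succ] [N + 1] times and bounding each term [c / (w (w + c))] below by
   [c / w - c / (w + 1)]. *)
Lemma psi_c_ge_partial c y N : 0 < c <= 1 -> 0 < y ->
  c / (y * (y + c)) + c / (y + 1) - c / (y + INR N + 1) + psi_c c (y + INR N + 1) <= psi_c c y.
Proof.
  intros Hc Hy. induction N as [| N IH].
  - rewrite (psi_c_succ c y) by lra. simpl INR. rewrite Rplus_0_r. lra.
  - rewrite S_INR. set (w := y + INR N + 1) in *.
    assert (Hw : 0 < w) by (unfold w; pose proof (pos_INR N); lra).
    replace (y + (INR N + 1) + 1) with (w + 1) by (unfold w; ring).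
    rewrite (psi_c_succ c w) in IH by lra.
    assert (c / w - c / (w + 1) <= c / (w * (w + c))).
    { replace (c / w - c / (w + 1)) with (c / (w * (w + 1))) by (field; lra).
      unfold Rdiv. apply Rmult_le_compat_l; [lra |]. apply Rinv_le_contravar; nra. }
    lra.
Qed.

(* As above, bounding [h / (w (w + h))] above by [h / (w - 1 + h) - h / (w + h)]. *)
Lemma psi_c_le_partial h z N : 0 < h <= 1 -> 0 < z ->
  psi_c h z <= h / (z * (z + h)) + h / (z + h) - h / (z + INR N + h) + psi_c h (z + INR N + 1).
Proof.
  intros Hh Hz. induction N as [| N IH].
  - rewrite (psi_c_succ h z) at 1 by lra. simpl INR. rewrite !Rplus_0_r. lra.
  - rewrite S_INR. set (w := z + INR N + 1) in *.
    assert (Hw : 1 <= w - z) by (unfold w; pose proof (pos_INR N); lra).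
    replace (z + (INR N + 1) + h) with (w + h) by (unfold w; ring).
    replace (z + (INR N + 1) + 1) with (w + 1) by (unfold w; ring).
    replace (z + INR N + h) with (w - 1 + h) in IH by (unfold w; ring).
    rewrite (psi_c_succ h w) in IH by lra.
    assert (h / (w * (w + h)) <= h / (w - 1 + h) - h / (w + h)).
    { replace (h / (w - 1 + h) - h / (w + h)) with (h / ((w - 1 + h) * (w + h))) by (field; lra).
      unfold Rdiv. apply Rmult_le_compat_l; [lra |]. apply Rinv_le_contravar; nra. }
    lra.
Qed.

Lemma psi_c_ge c y : 0 < c <= 1 -> 0 < y -> c / (y * (y + c)) + c / (y + 1) <= psi_c c y.
Proof.
  intros Hc Hy. apply (Rle_of_le_add_div_INR_succ _ _ c). intros N.
  pose proof (psi_c_ge_partial c y N Hc Hy). pose proof (pos_INR N).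
  pose proof (psi_c_ge0 c (y + INR N + 1) ltac:(lra) ltac:(lra)).
  assert (c / (y + INR N + 1) <= c / (INR N + 1)).
  { unfold Rdiv. apply Rmult_le_compat_l; [lra |]. apply Rinv_le_contravar; lra. }
  lra.
Qed.

Lemma psi_c_le h z : 0 < h <= 1 -> 0 < z -> psi_c h z <= h / (z * (z + h)) + h / (z + h).
Proof.
  intros Hh Hz. apply (Rle_of_le_add_div_INR_succ _ _ 1). intros N.
  pose proof (psi_c_le_partial h z N Hh Hz). pose proof (pos_INR N).
  pose proof (psi_c_le_inv h (z + INR N + 1) ltac:(lra) ltac:(lra) ltac:(lra)).
  assert (1 / (z + INR N + 1) <= 1 / (INR N + 1)).
  { unfold Rdiv. apply Rmult_le_compat_l; [lra |]. apply Rinv_le_contravar; lra. }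
  assert (0 <= h / (z + INR N + h)) by (apply Rlt_le, Rdiv_lt_0_compat; lra).
  lra.
Qed.

Lemma Rdiv_lt_cross a b c d : 0 < b -> 0 < d -> a * d < c * b -> a / b < c / d.
Proof.
  intros Hb Hd H. apply Rlt_div_l; [lra |].
  replace (c / d * b) with (c * b / d) by (field; lra). apply Rlt_div_r; lra.
Qed.

Lemma Rdiv_le_cross a b c d : 0 < b -> 0 < d -> a * d <= c * b -> a / b <= c / d.
Proof.
  intros Hb Hd H. apply Rle_div_l; [lra |].
  replace (c / d * b) with (c * b / d) by (field; lra). apply Rle_div_r; lra.
Qed.

Lemma lemma5p5_bounds_lt K T R B : 2 <= K -> 2 * K <= T -> 1 <= R -> R + K <= T -> T < B * K ->
  1 / T / (B / T * (B / T + 1 / T)) + 1 / T / (B / T + 1 / T)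
  < K * (K / T / (R / T * (R / T + K / T)) + K / T / (R / T + 1)).
Proof.
  intros HK HKT HR HRK HBK.
  assert (HB : 0 < B) by nra.
  replace (1 / T / (B / T * (B / T + 1 / T)) + 1 / T / (B / T + 1 / T))
    with (T / (B * (B + 1)) + 1 / (B + 1)) by (field; repeat split; lra).
  replace (K * (K / T / (R / T * (R / T + K / T)) + K / T / (R / T + 1)))
    with (K * K * T / (R * (R + K)) + K * K / (R + T)) by (field; repeat split; lra).
  assert (R * (R + K) < T * T) by nra.
  assert (K * K / T < K * K * T / (R * (R + K))).
  { apply Rdiv_lt_cross; [lra | nra |].
    pose proof (Rmult_lt_compat_l (K * K) _ _ ltac:(nra) H). lra. }
  assert (K * K / (2 * T) <= K * K / (R + T)) by (apply Rdiv_le_cross; nra).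
  assert (T * T < (B * K) * (B * K)) by nra.
  assert (T / (B * (B + 1)) < K * K / T).
  { apply Rdiv_lt_cross; [nra | lra |]. assert (0 <= K * K * B) by nra. lra. }
  assert (1 / (B + 1) < K / T) by (apply Rdiv_lt_cross; nra).
  assert (K / T <= K * K / (2 * T)).
  { apply Rdiv_le_cross; [lra | lra |].
    assert (0 <= (K - 2) * (K * T)) by (apply Rmult_le_pos; nra). lra. }
  lra.
Qed.

Theorem lemma5p5 (k t m r rbar : nat) :
  (2 <= k)%nat -> (2 <= t)%nat -> Nat.gcd k t = 1%nat ->
  (2 <= m)%nat -> (m * k <= t)%nat -> (t < (m + 1) * k)%nat ->
  (1 <= r)%nat -> (r <= t - k)%nat ->
  (1 <= rbar)%nat -> (rbar <= t)%nat -> ((rbar * k) mod t = r mod t)%nat ->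
  (m + 1 <= rbar)%nat ->
  INR k * psi_c (INR k / INR t) (INR r / INR t)
    > psi_c (1 / INR t) (INR rbar / INR t).
Proof.
  intros Hk _ _ Hm Hmk Htm Hr1 Hrt Hb1 _ _ Hmb.
  assert (HkT : (2 * k <= t)%nat) by nia.
  assert (HrkT : (r + k <= t)%nat) by lia.
  assert (HTbk : (t < rbar * k)%nat) by nia.
  apply le_INR in Hk, HkT, HrkT, Hr1, Hb1. apply lt_INR in HTbk.
  rewrite mult_INR in HkT, HTbk. rewrite plus_INR in HrkT. simpl INR in Hk, HkT, Hr1, Hb1.
  assert (HT : 0 < INR t) by lra.
  apply Rle_lt_trans with (1 / INR t / (INR rbar / INR t * (INR rbar / INR t + 1 / INR t))
                           + 1 / INR t / (INR rbar / INR t + 1 / INR t)).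
  { apply psi_c_le; [split |]; try apply Rdiv_lt_0_compat; try apply Rle_div_l; lra. }
  eapply Rlt_le_trans; [apply (lemma5p5_bounds_lt (INR k) (INR t) (INR r) (INR rbar)); lra |].
  apply Rmult_le_compat_l; [lra |].
  apply psi_c_ge; [split |]; try apply Rdiv_lt_0_compat; try apply Rle_div_l; lra.
Qed.
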